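(* For every integer $n\ge1$, the monomials $u^iv^jw^{n-i-j}$ occurring with nonzero coefficient in $P_{1/n}(u,v,w)$ are exactly those with $(i,j)\in\mathbb{Z}^2$, $i,j\ge0$, $i+\frac{j}{n}\ge1$ and $i+j\le n$.
   Context: Markov polynomials. Let $x,y,z$ be indeterminates. Consider the set consisting of all rationals $\rho\in[0,1]$, each written in lowest terms $\rho=a/b$ with integers $a\ge 0$, $b\ge 1$, together with the formal symbol $1/0$. Define Laurent polynomials $M_\rho(x,y,z)$ recursively by $M_{1/0}=y$, $M_{0/1}=x$, $M_{1/1}=\frac{x^2+y^2}{z}$, and: whenever $a/b$, $c/d$ are in this set with $|ad-bc|=1$ and $(a+2c)/(b+2d)\in[0,1]$, then $M_{\frac{a+2c}{b+2d}}=\big(M_{c/d}^2+M_{\frac{a+c}{b+d}}^2\big)/M_{a/b}$. This determines $M_\rho$ for every rational $\rho\in[0,1]$. Numerator. For coprime $1\le a\le b$, $P_{a/b}(u,v,w)$ denotes the homogeneous polynomial of degree $a+b-1$ such that $M_{a/b}(x,y,z)=P_{a/b}(x^2,y^2,z^2)/(x^{a-1}y^{b-1}z^{a+b-1})$; its existence is known. *)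

From HB Require Import structures.
From mathcomp Require Import all_boot all_order all_algebra.
From mathcomp Require Import fraction.
From mathcomp Require Export mpoly.
Set Implicit Arguments. Unset Strict Implicit. Unset Printing Implicit Defensive.
Import Order.TTheory GRing.Theory Num.Theory.
Local Open Scope ring_scope.

Definition Pol3 := {mpoly rat[3]}.
(* Field of rational functions Q(x,y,z); Laurent polynomials live in it. *)
Definition RF := {fraction Pol3}.

Definition i0 : 'I_3 := @Ordinal 3 0 isT.
Definition i1 : 'I_3 := @Ordinal 3 1 isT.
Definition i2 : 'I_3 := @Ordinal 3 2 isT.

Definition toRF (p : Pol3) : RF := @FracField.tofrac _ p.

Definition xF : RF := toRF 'X_i0.
Definition yF : RF := toRF 'X_i1.
Definition zF : RF := toRF 'X_i2.

(* Index set: a/b in lowest terms with 0 <= a <= b, b >= 1, or the formal 1/0. *)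
Definition valid_idx (a b : nat) : bool :=
  ((0 < b)%N && (a <= b)%N && coprime a b) || ((a == 1%N) && (b == 0%N)).

(* M : nat -> nat -> RF, M a b standing for M_{a/b}, satisfies the defining
   relations of the Markov polynomials. *)
Definition is_markov_family (M : nat -> nat -> RF) : Prop :=
  [/\ M 1%N 0%N = yF, M 0%N 1%N = xF,
      M 1%N 1%N = (xF ^+ 2 + yF ^+ 2) / zF &
      forall a b c d : nat,
        valid_idx a b -> valid_idx c d ->
        `|(a * d)%:Z - (b * c)%:Z| = 1 ->
        (a + 2 * c <= b + 2 * d)%N ->
        M (a + 2 * c)%N (b + 2 * d)%N
          = (M c d ^+ 2 + M (a + c)%N (b + d)%N ^+ 2) / M a b].

Definition sq_subst (P : Pol3) : Pol3 :=
  P \mPo [tuple ('X_i0 : Pol3) ^+ 2; ('X_i1 : Pol3) ^+ 2; ('X_i2 : Pol3) ^+ 2].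

Definition mono3 (i j k : nat) : 'X_{1..3} := [multinom of [:: i; j; k]].

(** Since 1/k and 0/1 are Farey neighbours, the exchange relation gives
    M_{1/(k+2)} M_{1/k} = x^2 + M_{1/(k+1)}^2.  Clearing denominators,
    y^k z^k M_{1/k} = y P_k(x^2, y^2, z^2), where P_k solves the linear recurrence
    P_{k+2} = (u + v + w) P_{k+1} - v w P_k with P_0 = 1, P_1 = u + v; its Cassini
    identity P_{k+2} P_k - P_{k+1}^2 = u v^k w^{k+1} is exactly what turns the linear
    recurrence into the exchange relation.  Writing the recurrence as the first-order
    system P_{k+1} = (u + v) P_k + w D_k, D_{k+1} = u P_k + w D_k, all coefficients
    are nonnegative, so supports propagate without cancellation: D_k is supported on
    the degree-k monomials divisible by u, and P_k on those together with v^k. *)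

From mathcomp Require Import all_boot all_order all_algebra.
From mathcomp Require Import fraction.
From mathcomp Require Import mpoly.
From mathcomp Require Import ring zify.
Set Implicit Arguments.
Unset Strict Implicit.
Unset Printing Implicit Defensive.

Import GRing.Theory Num.Theory.
Local Open Scope ring_scope.

Lemma mcoeffXM n (R : nzRingType) (i : 'I_n) (p : {mpoly R[n]}) (m : 'X_{1..n}) :
  ('X_i * p)@_m = if m i != 0%N then p@_(m - U_(i)) else 0.
Proof.
rewrite -commr_mpolyX; case: ifP => [mi_neq0|/negbFE mi_eq0].
  by rewrite -{1}(submK (m := U_(i)) (m' := m)) ?lep1mP // addmC mcoeffMX.
apply/memN_msupp_eq0; rewrite (perm_mem (msuppMX p U_(i))).
by apply/mapP=> -[m' _ def_m]; move: mi_eq0; rewrite def_m mnmDE mnm1E eqxx.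
Qed.

Section NonnegativeCoefficients.

Variables (n : nat) (R : numDomainType).
Implicit Types (p q : {mpoly R[n]}) (m : 'X_{1..n}).

Definition nneg_coef p := forall m, 0 <= p@_m.

Lemma nneg_coef0 : nneg_coef 0.
Proof. by move=> m; rewrite mcoeff0. Qed.

Lemma nneg_coef1 : nneg_coef 1.
Proof. by move=> m; rewrite mcoeff1 ler0n. Qed.

Lemma nneg_coefD p q : nneg_coef p -> nneg_coef q -> nneg_coef (p + q).
Proof. by move=> p_ge0 q_ge0 m; rewrite mcoeffD addr_ge0. Qed.

Lemma nneg_coefXM i p : nneg_coef p -> nneg_coef ('X_i * p).
Proof. by move=> p_ge0 m; rewrite mcoeffXM; case: ifP. Qed.

Lemma mcoeffXM_neq0 i p m :
  (('X_i * p)@_m != 0) = (m i != 0%N) && (p@_(m - U_(i)) != 0).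
Proof. by rewrite mcoeffXM; case: ifP; rewrite ?eqxx. Qed.

Lemma mcoeffD_neq0 p q m : nneg_coef p -> nneg_coef q ->
  ((p + q)@_m != 0) = (p@_m != 0) || (q@_m != 0).
Proof. by move=> p_ge0 q_ge0; rewrite mcoeffD paddr_eq0 ?negb_and. Qed.

End NonnegativeCoefficients.

Lemma mnm3_eqE (m1 m2 : 'X_{1..3}) :
  (m1 == m2) = [&& m1 i0 == m2 i0, m1 i1 == m2 i1 & m1 i2 == m2 i2].
Proof.
apply/eqP/and3P => [->|[/eqP e0 /eqP e1 /eqP e2]]; first by rewrite !eqxx.
apply/mnmP=> -[[|[|[|//]]] lti].
- by rewrite (_ : Ordinal lti = i0) //; apply/val_inj.
- by rewrite (_ : Ordinal lti = i1) //; apply/val_inj.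
- by rewrite (_ : Ordinal lti = i2) //; apply/val_inj.
Qed.

Lemma mono3E i j k :
  [/\ mono3 i j k i0 = i, mono3 i j k i1 = j & mono3 i j k i2 = k].
Proof. by []. Qed.

Lemma second_order_cassini (R : comPzRingType) (f : nat -> R) (s t : R) :
  (forall k, f k.+2 = s * f k.+1 - t * f k) ->
  forall k, f k.+2 * f k - f k.+1 ^+ 2 = t ^+ k * (f 2 * f 0 - f 1 ^+ 2).
Proof.
move=> rec; elim=> [|k IHk]; first by rewrite expr0 mul1r.
by rewrite (exprS t) -mulrA -IHk (rec k.+1) (rec k); ring.
Qed.

Local Notation u := ('X_i0 : Pol3).
Local Notation v := ('X_i1 : Pol3).
Local Notation w := ('X_i2 : Pol3).

Fixpoint markov_pair (k : nat) : Pol3 * Pol3 :=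
  if k is k'.+1 then
    ((u + v) * (markov_pair k').1 + w * (markov_pair k').2,
     u * (markov_pair k').1 + w * (markov_pair k').2)
  else (1, 0).

Definition markovP k := (markov_pair k).1.
Definition markovD k := (markov_pair k).2.

Lemma markovP0 : markovP 0 = 1. Proof. by []. Qed.

Lemma markovD0 : markovD 0 = 0. Proof. by []. Qed.

Lemma markovPS k : markovP k.+1 = (u + v) * markovP k + w * markovD k.
Proof. by []. Qed.

Lemma markovDS k : markovD k.+1 = u * markovP k + w * markovD k.
Proof. by []. Qed.

Lemma markovP_rec k :
  markovP k.+2 = (u + v + w) * markovP k.+1 - v * w * markovP k.
Proof. by rewrite !markovPS markovDS; ring. Qed.

Lemma markovP_cassini k :
  markovP k.+2 * markovP k = markovP k.+1 ^+ 2 + u * v ^+ k * w ^+ k.+1.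
Proof.
apply/eqP; rewrite addrC -subr_eq (second_order_cassini markovP_rec).
rewrite !markovPS markovDS markovP0 markovD0 exprMn (exprS w).
by apply/eqP; ring.
Qed.

Lemma markov_nneg_coef k : nneg_coef (markovP k) /\ nneg_coef (markovD k).
Proof.
elim: k => [|k [P_ge0 D_ge0]].
  by rewrite markovP0 markovD0; split; [apply: nneg_coef1 | apply: nneg_coef0].
rewrite markovPS markovDS mulrDl.
by split; do ?apply: nneg_coefD; apply: nneg_coefXM.
Qed.

Definition markovP_supp k (m : 'X_{1..3}) :=
  (m i0 + m i1 + m i2 == k)%N && ((m i0 != 0)%N || (m i1 == k)).

Definition markovD_supp k (m : 'X_{1..3}) :=
  (m i0 + m i1 + m i2 == k)%N && (m i0 != 0)%N.

Lemma markov_supp k :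
  (forall m, ((markovP k)@_m != 0) = markovP_supp k m) /\
  (forall m, ((markovD k)@_m != 0) = markovD_supp k m).
Proof.
elim: k => [|k [IHP IHD]].
  split=> m; rewrite ?markovP0 ?markovD0 /markovP_supp /markovD_supp.
    by rewrite mcoeff1 pnatr_eq0 -lt0n lt0b mnm3_eqE !mnm0E; lia.
  by rewrite mcoeff0 eqxx; lia.
have [P_ge0 D_ge0] := markov_nneg_coef k.
rewrite markovPS markovDS mulrDl; split=> m.
all: rewrite !mcoeffD_neq0; try by do ?[apply: nneg_coefD | apply: nneg_coefXM].
all: rewrite !mcoeffXM_neq0 !IHP !IHD /markovP_supp /markovD_supp !mnmBE !mnm1E /=.
all: lia.
Qed.

Lemma markovP_suppE k m : markovP_supp k m <->
  exists i j : nat,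
    [/\ (i + j <= k)%N, (k <= k * i + j)%N & m = mono3 i j (k - i - j)].
Proof.
rewrite /markovP_supp; split=> [/andP[/eqP deg_m supp_m] | [i [j [ij_le k_le ->]]]].
  exists (m i0), (m i1); split; first lia.
    case/orP: supp_m => [mi0_neq0|/eqP->]; last by rewrite leq_addl.
    by apply: leq_trans (leq_addr _ _); rewrite leq_pmulr // lt0n.
  apply/eqP; rewrite mnm3_eqE; have [-> -> ->] := mono3E (m i0) (m i1) (k - m i0 - m i1).
  lia.
have [-> -> ->] := mono3E i j (k - i - j).
by case: i ij_le k_le; lia.
Qed.

Lemma markovP_neq0 k : markovP k != 0.
Proof.
have : markovP_supp k (mono3 0 k 0).
  by rewrite /markovP_supp; have [-> -> ->] := mono3E 0 k 0; rewrite addn0 !eqxx orbT.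
by rewrite -(markov_supp k).1; apply: contraNneq => ->; rewrite mcoeff0.
Qed.

Definition sq_frac (p : Pol3) : RF := toRF (sq_subst p).

Lemma sq_subst_mpolyX (m : 'X_{1..3}) : sq_subst 'X_[m] = 'X_[m *+ 2].
Proof.
rewrite /sq_subst comp_mpolyX [RHS]mpolyXE_id; apply: eq_bigr => i _.
rewrite mulmnE mulnC exprM; congr (_ ^+ _).
by case: i => [[|[|[|//]]] lti]; congr (_ ^+ 2); apply/val_inj.
Qed.

Lemma mcoeff_sq_subst p m : (sq_subst p)@_(m *+ 2) = p@_m.
Proof.
rewrite /sq_subst comp_mpolyEX (raddf_sum (mcoeff (m *+ 2))) [p in RHS]mpolyE.
rewrite (raddf_sum (mcoeff m)); apply: eq_bigr => m' _ /=.
rewrite -/(sq_subst _) sq_subst_mpolyX !mcoeffZ !mcoeffX.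
suff -> : (m' *+ 2 == m *+ 2)%MM = (m' == m) by [].
apply/eqP/eqP => [/mnmP double_eq|-> //].
by apply/mnmP=> i; move: (double_eq i); rewrite !mulmnE; lia.
Qed.

Lemma sq_frac_inj : injective sq_frac.
Proof.
move=> p q /eqP; rewrite /sq_frac /toRF tofrac_eq => /eqP e.
by apply/mpolyP=> m; rewrite -(mcoeff_sq_subst p) e mcoeff_sq_subst.
Qed.

Lemma sq_frac0 : sq_frac 0 = 0.
Proof. by rewrite /sq_frac /sq_subst /toRF !rmorph0. Qed.

Lemma sq_frac1 : sq_frac 1 = 1.
Proof. by rewrite /sq_frac /sq_subst /toRF !rmorph1. Qed.

Lemma sq_fracD p q : sq_frac (p + q) = sq_frac p + sq_frac q.
Proof. by rewrite /sq_frac /sq_subst /toRF !rmorphD. Qed.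

Lemma sq_fracM p q : sq_frac (p * q) = sq_frac p * sq_frac q.
Proof. by rewrite /sq_frac /sq_subst /toRF !rmorphM. Qed.

Lemma sq_fracXn p k : sq_frac (p ^+ k) = sq_frac p ^+ k.
Proof. by rewrite /sq_frac /sq_subst /toRF !rmorphXn. Qed.

Lemma sq_frac_var : [/\ sq_frac u = xF ^+ 2, sq_frac v = yF ^+ 2 & sq_frac w = zF ^+ 2].
Proof. by split; rewrite /sq_frac /sq_subst comp_mpolyXU /= /toRF rmorphXn. Qed.

Lemma sq_frac_cassini k :
  sq_frac (markovP k.+2) * sq_frac (markovP k) =
  sq_frac (markovP k.+1) ^+ 2 + xF ^+ 2 * (yF ^+ k * zF ^+ k.+1) ^+ 2.
Proof.
have [su sv sw] := sq_frac_var.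
rewrite -sq_fracM markovP_cassini sq_fracD !sq_fracM !sq_fracXn su sv sw.
by rewrite (exprAC yF) (exprAC zF); ring.
Qed.

Lemma toRF_var_neq0 (i : 'I_3) : toRF 'X_i != 0.
Proof.
rewrite /toRF tofrac_eq0; apply: contraTneq isT => X_eq0.
by move: (@mcoeffXU 3 rat i i); rewrite X_eq0 mcoeff0 eqxx => /esym/eqP; rewrite oner_eq0.
Qed.

(* The exchange step M_{1/(k+2)} = (x^2 + M_{1/(k+1)}^2) / M_{1/k}, with the
   normalisation m_j a_j = y s_j and a_{j+1} = a_j y z. *)
Lemma exchange_scaled (F : fieldType) (x y z a m0 m1 s0 s1 s2 : F) :
  y != 0 -> z != 0 -> a != 0 -> s0 != 0 ->
  m0 * a = y * s0 -> m1 * (a * y * z) = y * s1 ->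
  s2 * s0 = s1 ^+ 2 + x ^+ 2 * (a * z) ^+ 2 ->
  (x ^+ 2 + m1 ^+ 2) / m0 * (a * y * z * y * z) = y * s2.
Proof.
move=> y_neq0 z_neq0 a_neq0 s0_neq0 m0_eq m1_eq s2_eq.
have ayz_neq0 : a * y * z != 0 by rewrite !mulf_neq0.
rewrite -(mulfK a_neq0 m0) -(mulfK ayz_neq0 m1) -(mulfK s0_neq0 s2) m0_eq m1_eq s2_eq.
by field; rewrite ?y_neq0 ?z_neq0 ?a_neq0 ?s0_neq0.
Qed.

Section MarkovOneOverN.

Variable M : nat -> nat -> RF.
Hypothesis HM : is_markov_family M.

Lemma markov_exchange_one_over k :
  M 1%N k.+2 = (xF ^+ 2 + M 1%N k.+1 ^+ 2) / M 1%N k.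
Proof.
have [_ M01 _ exchange] := HM.
have := exchange 1%N k 0%N 1%N; rewrite M01 muln0 muln1 !addn1 addn2; apply => //.
by rewrite /valid_idx; case: k => [|k] //=; rewrite coprime1n.
Qed.

Lemma markov_one_over_numer k :
  M 1%N k * (yF ^+ k * zF ^+ k) = yF * sq_frac (markovP k).
Proof.
have [M10 _ M11 _] := HM.
have y_neq0 : yF != 0 := toRF_var_neq0 i1.
have z_neq0 : zF != 0 := toRF_var_neq0 i2.
have [su sv _] := sq_frac_var.
pose a j := yF ^+ j * zF ^+ j.
have a_neq0 j : a j != 0 := mulf_neq0 (expf_neq0 j y_neq0) (expf_neq0 j z_neq0).
have aS j : a j.+1 = a j * yF * zF by rewrite /a !exprS; ring.
suff: forall j, M 1%N j * a j = yF * sq_frac (markovP j) /\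
                M 1%N j.+1 * a j.+1 = yF * sq_frac (markovP j.+1) by move=> /(_ k)[].
elim=> [|j [IH0 IH1]].
  rewrite aS /a M10 M11 markovPS markovP0 markovD0 !expr0 !mulr1 mulr0 addr0.
  rewrite sq_frac1 sq_fracD su sv !mul1r.
  by split; [rewrite mulr1 | rewrite mulrCA divfK].
have S_neq0 : sq_frac (markovP j) != 0.
  by rewrite -sq_frac0 (inj_eq sq_frac_inj) markovP_neq0.
have cassini := sq_frac_cassini j.
rewrite (exprSr zF) mulrA -/(a j) in cassini.
split=> //; rewrite aS in IH1; rewrite markov_exchange_one_over !aS.
exact: exchange_scaled y_neq0 z_neq0 (a_neq0 j) S_neq0 IH0 IH1 cassini.
Qed.

End MarkovOneOverN.

Theorem corollary5p3 (M : nat -> nat -> RF) (HM : is_markov_family M)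
    (n : nat) (Hn : (1 <= n)%N) (P : Pol3)
    (HP : M 1%N n = toRF (sq_subst P)
                    / toRF (('X_i1 : Pol3) ^+ n.-1 * ('X_i2 : Pol3) ^+ n)) :
  forall m : 'X_{1..3},
    P@_m != 0 <->
    exists i j : nat,
      [/\ (i + j <= n)%N, (n <= n * i + j)%N & m = mono3 i j (n - i - j)].
Proof.
move=> m; have P_eq : P = markovP n.
  case: n Hn HP => // n _ HP.
  have y_neq0 : yF != 0 := toRF_var_neq0 i1.
  have d_neq0 : yF ^+ n * zF ^+ n.+1 != 0 :=
    mulf_neq0 (expf_neq0 n y_neq0) (expf_neq0 n.+1 (toRF_var_neq0 i2)).
  have d_eq : toRF (v ^+ n * w ^+ n.+1) = yF ^+ n * zF ^+ n.+1.
    by rewrite /toRF rmorphM !rmorphXn.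
  apply: sq_frac_inj; apply: (mulfI y_neq0).
  by rewrite -(markov_one_over_numer HM) HP d_eq (exprS yF) -(mulrA yF) mulrCA divfK.
by rewrite P_eq (markov_supp n).1; apply: markovP_suppE.
Qed.
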